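(* Let $(\mathbf{H},m,\Delta)$ be a self-adjoint poset Hopf monoid. For each finite set $I$ let $\mathbf{d}[I]$ be the subspace of $\mathbf{k}\mathbf{H}[I]$ spanned by the products $m_{S,T}(y,z)$ with $I=S\sqcup T$, $S,T$ nonempty, $y\in\mathbf{H}[S]$, $z\in\mathbf{H}[T]$, and let $\mathbf{p}[I]$ be the subspace of primitive elements of $\mathbf{k}\mathbf{H}[I]$. Then $\mathbf{k}\mathbf{H}[I]=\mathbf{p}[I]\oplus\mathbf{d}[I]$ for every finite set $I$.
   Context: $\mathbf{k}$ is a field of characteristic $0$. A (connected) poset species $\mathbf{H}$ assigns to each finite set $I$ a locally finite poset $\mathbf{H}[I]$, $\mathbf{H}[\emptyset]=\{1\}$, and to each bijection an order-preserving bijection, functorially. A poset Hopf monoid $(\mathbf{H},m,\Delta)$ consists of order-preserving maps $m_{S,T}:\mathbf{H}[S]\times\mathbf{H}[T]\to\mathbf{H}[S\sqcup T]$ (natural, associative, unital) and $\Delta_{S,T}:\mathbf{H}[S\sqcup T]\to\mathbf{H}[S]\times\mathbf{H}[T]$ (natural, coassociative, counital), satisfying compatibility: for $I=S_1\sqcup S_2=T_1\sqcup T_2$, $A=S_1\cap T_1$, $B=S_1\cap T_2$, $C=S_2\cap T_1$, $D=S_2\cap T_2$, if $\Delta_{A,B}(x)=(x_A,x_B)$, $\Delta_{C,D}(y)=(y_C,y_D)$ then $\Delta_{T_1,T_2}(m_{S_1,S_2}(x,y))=(m_{A,C}(x_A,y_C),m_{B,D}(x_B,y_D))$. It is self-adjoint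 if $m_{S,T}$ and $\Delta_{S,T}$ form a Galois connection for all $S,T$ (i.e. $(\mathbf{H},\Delta)$ and $(\mathbf{H},m)$ form an adjoint pair: either $\Delta_{S,T}(x)\le(y,z)\iff x\le m_{S,T}(y,z)$ for all $x,y,z$, or $m_{S,T}(y,z)\le x\iff(y,z)\le\Delta_{S,T}(x)$ for all $x,y,z$). $\mathbf{k}\mathbf{H}[I]$ is the vector space with basis $\mathbf{H}[I]$, operations extended linearly. An element $p\in\mathbf{k}\mathbf{H}[I]$ is primitive if $\Delta_{S,T}(p)=0$ for all $I=S\sqcup T$ with $S,T$ nonempty. *)

From HB Require Import structures.
From mathcomp Require Import all_boot all_order all_algebra.
From mathcomp Require Import finmap.

Set Implicit Arguments.
Unset Strict Implicit.
Unset Printing Implicit Defensive.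

Import GRing.Theory.
Local Open Scope fset_scope.

(* Encoding of a (set) species with labels in finite subsets of nat.        *)
(* All structures H[I] (I : {fset nat}) are gathered into one carrier type; *)
(* [lab x] is the finite set I such that x \in H[I].  Operations are total  *)
(* functions on the carrier; the axioms only constrain them on elements     *)
(* with the appropriate labels.                                             *)
(*   le      : the partial order on each H[I] (only relates equal labels)   *)
(*   one     : the unique element of H[emptyset]                            *)
(*   mul x y : m_{S,T}(x,y) where S = lab x, T = lab y                      *)
(*   cop S T x : Delta_{S,T}(x) for x \in H[S \sqcup T]                     *)
(*   act s x : H[s](x), the image of x under the bijection                  *)
(*             s|_{lab x} : lab x -> s @` lab x, for a permutation s of nat *)
(*             (every bijection between finite subsets of nat extends to    *)
(*             such a permutation).                                         *)

Record posetHopfData := PosetHopfData {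
  car : choiceType;
  lab : car -> {fset nat};
  le : car -> car -> Prop;
  one : car;
  mul : car -> car -> car;
  cop : {fset nat} -> {fset nat} -> car -> car * car;
  act : (nat -> nat) -> car -> car
}.

Section PHM.
Variable H : posetHopfData.
Local Notation car := (car H).
Local Notation lab := (@lab H).
Local Notation le := (@le H).
Local Notation one := (one H).
Local Notation mul := (@mul H).
Local Notation cop := (@cop H).
Local Notation act := (@act H).

Definition le2 (p q : car * car) : Prop := le p.1 q.1 /\ le p.2 q.2.

Definition poset_species_axioms : Prop :=
  [/\ [/\ (forall x y, le x y -> lab x = lab y),
      (forall x, le x x),
      (forall x y, le x y -> le y x -> x = y),
      (forall x y z, le x y -> le y z -> le x z) &
      (forall x y, exists s : seq car, forall z, le x z -> le z y -> z \in s)],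
      lab one = fset0 /\ (forall x, lab x = fset0 -> x = one) &
      [/\ (forall s x, bijective s -> lab (act s x) = s @` lab x),
          (forall x, act id x = x),
          (forall s t x, bijective s -> bijective t ->
              act (s \o t) x = act s (act t x)),
          (forall s t x, bijective s -> bijective t ->
              {in lab x, s =1 t} -> act s x = act t x) &
          (forall s x y, bijective s -> le x y -> le (act s x) (act s y))]].

Definition hopf_monoid_axioms : Prop :=
  [/\ [/\
   (forall x y, [disjoint lab x & lab y] -> lab (mul x y) = lab x `|` lab y),
   (forall S T x, [disjoint S & T] -> lab x = S `|` T ->
      lab (cop S T x).1 = S /\ lab (cop S T x).2 = T),
   (forall x x' y y', [disjoint lab x & lab y] -> le x x' -> le y y' ->
      le (mul x y) (mul x' y')) &
   (forall S T x x', [disjoint S & T] -> lab x = S `|` T -> le x x' ->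
      le2 (cop S T x) (cop S T x'))],
   [/\
   (forall s x y, bijective s -> [disjoint lab x & lab y] ->
      act s (mul x y) = mul (act s x) (act s y)) &
   (forall s S T x, bijective s -> [disjoint S & T] -> lab x = S `|` T ->
      cop (s @` S) (s @` T) (act s x) =
      (act s (cop S T x).1, act s (cop S T x).2))] &
   [/\
   (forall x y z, [disjoint lab x & lab y] -> [disjoint lab x & lab z] ->
      [disjoint lab y & lab z] -> mul (mul x y) z = mul x (mul y z)),
   (forall x, mul one x = x /\ mul x one = x),
   (forall R S T x, [disjoint R & S] -> [disjoint R & T] -> [disjoint S & T] ->
      lab x = R `|` S `|` T ->
      let ab := cop (R `|` S) T x in
      let cd := cop R (S `|` T) x in
      cop R S ab.1 = (cd.1, (cop S T cd.2).1) /\ ab.2 = (cop S T cd.2).2),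
   (forall x, cop (lab x) fset0 x = (x, one) /\ cop fset0 (lab x) x = (one, x)) &
   (forall S1 S2 T1 T2 x y, [disjoint S1 & S2] -> [disjoint T1 & T2] ->
      S1 `|` S2 = T1 `|` T2 -> lab x = S1 -> lab y = S2 ->
      let xx := cop (S1 `&` T1) (S1 `&` T2) x in
      let yy := cop (S2 `&` T1) (S2 `&` T2) y in
      cop T1 T2 (mul x y) = (mul xx.1 yy.1, mul xx.2 yy.2))]].

Definition poset_hopf_monoid : Prop :=
  poset_species_axioms /\ hopf_monoid_axioms.

Definition self_adjoint : Prop :=
  (forall S T x y z, [disjoint S & T] -> lab x = S `|` T -> lab y = S ->
      lab z = T -> (le2 (cop S T x) (y, z) <-> le x (mul y z)))
  \/
  (forall S T x y z, [disjoint S & T] -> lab x = S `|` T -> lab y = S ->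
      lab z = T -> (le (mul y z) x <-> le2 (y, z) (cop S T x))).

(* Linearization over a field k.  Vectors are finitely supported functions  *)
(* car -> k (coefficients on the basis); kH[I] consists of those supported  *)
(* on H[I].                                                                 *)
Variable k : fieldType.

Definition vect := {fsfun car -> k with 0%R}.

Definition in_kH (I : {fset nat}) (v : vect) : Prop :=
  forall x, x \in finsupp v -> lab x = I.

(* coefficient of the basis element (y, z) of k(H[S] x H[T]) in Delta_{S,T}(v) *)
Definition copL (S T : {fset nat}) (v : vect) (yz : car * car) : k :=
  (\sum_(x <- finsupp v | cop S T x == yz) v x)%R.

Definition nontriv_decomp (I S T : {fset nat}) : Prop :=
  [/\ [disjoint S & T], S `|` T = I, S != fset0 & T != fset0].

Definition primitive (I : {fset nat}) (v : vect) : Prop :=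
  in_kH I v /\
  forall S T, nontriv_decomp I S T -> forall yz, copL S T v yz = 0%R.

Definition in_decomposables (I : {fset nat}) (v : vect) : Prop :=
  in_kH I v /\
  exists s : seq (k * (car * car)),
    (forall t, t \in s -> nontriv_decomp I (lab t.2.1) (lab t.2.2)) /\
    forall x, v x = (\sum_(t <- s) t.1 * (mul t.2.1 t.2.2 == x)%:R)%R.

Definition direct_sum_p_d (I : {fset nat}) : Prop :=
  (forall v, in_kH I v -> exists p d,
      [/\ primitive I p, in_decomposables I d & forall x, v x = (p x + d x)%R])
  /\ (forall v, primitive I v -> in_decomposables I v -> forall x, v x = 0%R).

End PHM.

(* Self-adjointness yields a partial order R (the given order or its opposite) with
   R (y * z) x <-> R y x_S /\ R z x_T, where Delta_{S,T}(x) = (x_S, x_T).  Since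
   Delta_{T,S}(z * y) = (y, z) by compatibility, this forces m, and then Delta, to be
   commutative.

   Existence: fix i0 in I and set P(w) = w - sum_S P(w_S) * w/S over the proper subsets
   S of I containing i0.  Then w - P(w) is decomposable, and P(w) is primitive: by
   cocommutativity one may assume i0 in A for a decomposition I = A + B; the terms with
   S not inside A vanish by induction because Delta_{A,B} is multiplicative, while by
   coassociativity those with S inside A add up to Delta_{A,B}(w), through the defining
   recursion of P(w_A).

   Uniqueness: if v <> 0 is primitive and decomposable, let m be R-maximal in its
   support; as v is decomposable, m = y * z for a nontrivial decomposition.  Pairing v
   with the indicator of {x | R m x} gives v(m) by maximality, but by the adjunction
   this indicator is a function of Delta_{S,T}(x), so the pairing vanishes by
   primitivity.

   No hypothesis on the characteristic of k is needed. *)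

From Pilot Require Import Defs.
From mathcomp Require Import all_boot all_order all_algebra.
From mathcomp Require Import finmap boolp.

Set Implicit Arguments.
Unset Strict Implicit.
Unset Printing Implicit Defensive.

Import GRing.Theory.

Local Open Scope fset_scope.
Local Open Scope ring_scope.

Section FsetFacts.
Variable K : choiceType.
Implicit Types A B J S : {fset K}.

Lemma fsetUDK S J : S `<=` J -> S `|` (J `\` S) = J.
Proof. by move=> sSJ; rewrite fsetUDl fsetDv fsetD0; apply/fsetUidPr. Qed.

Lemma fdisjointDr S J : [disjoint S & J `\` S].
Proof. by apply/fdisjointP => x xS; rewrite inE xS. Qed.

Lemma fsetDUl_disjoint S A B : [disjoint B & S] -> (A `|` B) `\` S = (A `\` S) `|` B.
Proof. by move=> dBS; rewrite fsetDUl (fsetDidPl _ _ dBS). Qed.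

Lemma fsetIUr_sub S A B : S `<=` A `|` B -> (S `&` A) `|` (S `&` B) = S.
Proof. by rewrite -fsetIUr => /fsetIidPl. Qed.

Lemma fdisjointI S A B : [disjoint A & B] -> [disjoint S `&` A & S `&` B].
Proof.
by move=> dAB; apply: fdisjointWl (fsubsetIr _ _) (fdisjointWr (fsubsetIr _ _) dAB).
Qed.

Lemma fset_neq0 x A : x \in A -> A != fset0.
Proof. by move=> xA; apply/fset0Pn; exists x. Qed.

End FsetFacts.

Section HopfMonoidAxioms.
Variable H : posetHopfData.
Local Notation car := (Defs.car H).
Local Notation lab := (@Defs.lab H).
Local Notation one := (Defs.one H).
Local Notation mul := (@Defs.mul H).
Local Notation cop := (@Defs.cop H).

Hypothesis HH : poset_hopf_monoid H.

Lemma lab_mul x y : [disjoint lab x & lab y] -> lab (mul x y) = lab x `|` lab y.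
Proof. by case: HH => _ [[h _ _ _] _ _]; apply: h. Qed.

Lemma lab_cop S T x : [disjoint S & T] -> lab x = S `|` T ->
  lab (cop S T x).1 = S /\ lab (cop S T x).2 = T.
Proof. by case: HH => _ [[_ h _ _] _ _]; apply: h. Qed.

Lemma mul1m x : mul one x = x.
Proof. by case: HH => _ [_ _ [_ h _ _ _]]; case: (h x). Qed.

Lemma mulm1 x : mul x one = x.
Proof. by case: HH => _ [_ _ [_ h _ _ _]]; case: (h x). Qed.

Lemma cop_lab0 x : cop (lab x) fset0 x = (x, one).
Proof. by case: HH => _ [_ _ [_ _ _ h _]]; case: (h x). Qed.

Lemma cop_0lab x : cop fset0 (lab x) x = (one, x).
Proof. by case: HH => _ [_ _ [_ _ _ h _]]; case: (h x). Qed.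

Lemma cop_coassoc R S T x :
  [disjoint R & S] -> [disjoint R & T] -> [disjoint S & T] ->
  lab x = R `|` S `|` T ->
  cop R S (cop (R `|` S) T x).1 =
    ((cop R (S `|` T) x).1, (cop S T (cop R (S `|` T) x).2).1) /\
  (cop (R `|` S) T x).2 = (cop S T (cop R (S `|` T) x).2).2.
Proof. by case: HH => _ [_ _ [_ _ h _ _]]; apply: h. Qed.

Lemma cop_mul S1 S2 T1 T2 x y : [disjoint S1 & S2] -> [disjoint T1 & T2] ->
  S1 `|` S2 = T1 `|` T2 -> lab x = S1 -> lab y = S2 ->
  cop T1 T2 (mul x y) =
    (mul (cop (S1 `&` T1) (S1 `&` T2) x).1 (cop (S2 `&` T1) (S2 `&` T2) y).1,
     mul (cop (S1 `&` T1) (S1 `&` T2) x).2 (cop (S2 `&` T1) (S2 `&` T2) y).2).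
Proof. by case: HH => _ [_ _ [_ _ _ _ h]]; apply: h. Qed.

Lemma cop_mul_swap y z : [disjoint lab y & lab z] ->
  cop (lab y) (lab z) (mul z y) = (y, z).
Proof.
move=> dyz; have dzy := dyz; rewrite fdisjoint_sym in dzy.
rewrite (@cop_mul (lab z) (lab y)) 1?fsetUC //.
rewrite (disjoint_fsetI0 dyz) (disjoint_fsetI0 dzy) !fsetIid.
by rewrite cop_0lab cop_lab0 /= mul1m mulm1.
Qed.

End HopfMonoidAxioms.

Definition mul_cop_adjunction (H : posetHopfData) (R : car H -> car H -> Prop) :=
  forall S T x y z, [disjoint S & T] -> Defs.lab x = S `|` T ->
  Defs.lab y = S -> Defs.lab z = T ->
  (R (Defs.mul y z) x <-> R y (Defs.cop S T x).1 /\ R z (Defs.cop S T x).2).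

Lemma self_adjoint_adjunction H : poset_hopf_monoid H -> self_adjoint H ->
  exists R : car H -> car H -> Prop,
    [/\ (forall x, R x x), (forall x y, R x y -> R y x -> x = y),
        (forall x y z, R x y -> R y z -> R x z) & mul_cop_adjunction R].
Proof.
case=> [[[_ le_refl le_anti le_trans _] _ _] _] [adj | adj].
  exists (fun y x => Defs.le x y); split => //.
  - by move=> x y ? ?; apply: le_anti.
  - by move=> x y z Rxy Ryz; apply: le_trans Ryz Rxy.
  - by move=> S T x y z dST lx ly lz; apply: iff_sym; apply: adj.
by exists (@Defs.le H); split.
Qed.

Section Adjunction.
Variables (H : posetHopfData) (R : car H -> car H -> Prop).
Local Notation lab := (@Defs.lab H).
Local Notation mul := (@Defs.mul H).
Local Notation cop := (@Defs.cop H).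

Hypotheses (HH : poset_hopf_monoid H) (R_anti : forall x y, R x y -> R y x -> x = y).
Hypotheses (R_refl : forall x, R x x) (R_adj : mul_cop_adjunction R).

Lemma mulC y z : [disjoint lab y & lab z] -> mul y z = mul z y.
Proof.
move=> dyz; have dzy := dyz; rewrite fdisjoint_sym in dzy.
have lyz : lab (mul y z) = lab z `|` lab y by rewrite lab_mul // fsetUC.
have lzy : lab (mul z y) = lab y `|` lab z by rewrite lab_mul // fsetUC.
by apply: R_anti; [apply/(R_adj dyz lzy) | apply/(R_adj dzy lyz)];
  rewrite // cop_mul_swap.
Qed.

Lemma copC S T x : [disjoint S & T] -> lab x = S `|` T ->
  cop T S x = ((cop S T x).2, (cop S T x).1).
Proof.
move=> dST lx; have dTS := dST; rewrite fdisjoint_sym in dTS.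
have lx' : lab x = T `|` S by rewrite fsetUC.
have [l1 l2] := lab_cop HH dST lx; have [l3 l4] := lab_cop HH dTS lx'.
case E1: (cop S T x) l1 l2 => [a b] /= la lb.
case E2: (cop T S x) l3 l4 => [c e] /= lc le.
have /(R_adj dTS lx' lb la) : R (mul b a) x.
  by rewrite -mulC ?la ?lb //; apply/(R_adj dST lx la lb); rewrite E1.
have /(R_adj dST lx le lc) : R (mul e c) x.
  by rewrite -mulC ?lc ?le //; apply/(R_adj dTS lx' lc le); rewrite E2.
by rewrite E1 E2 /= => -[Rbc Rae] [Rea Rcb]; rewrite (R_anti Rbc Rcb) (R_anti Rae Rea).
Qed.

End Adjunction.

(* A formal linear combination is a list of (coefficient, basis element) pairs. *)
Definition lin_ext (R : comPzRingType) (T : Type) (F : T -> R) (s : seq (R * T)) : R :=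
  \sum_(t <- s) t.1 * F t.2.

Section FormalCombinations.
Variables (R : comPzRingType) (T U : eqType).
Implicit Types (F G : T -> R) (s : seq (R * T)).

Lemma eq_in_lin_ext F G s :
  {in s, forall t, F t.2 = G t.2} -> lin_ext F s = lin_ext G s.
Proof. by move=> FG; apply: eq_big_seq => t /FG ->. Qed.

Lemma lin_extD F G s : lin_ext (fun x => F x + G x) s = lin_ext F s + lin_ext G s.
Proof. by rewrite -big_split; apply: eq_bigr => t _; rewrite mulrDr. Qed.

Lemma lin_ext_eq0 F s : {in s, forall t, F t.2 = 0} -> lin_ext F s = 0.
Proof. by move=> F0; rewrite /lin_ext big_seq big1 // => t /F0 ->; rewrite mulr0. Qed.

Lemma lin_ext_cons F a x s : lin_ext F ((a, x) :: s) = a * F x + lin_ext F s.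
Proof. by rewrite /lin_ext big_cons. Qed.

Lemma lin_ext_map (f : T -> U) (F : U -> R) s :
  lin_ext F [seq (t.1, f t.2) | t <- s] = lin_ext (F \o f) s.
Proof. by rewrite /lin_ext big_map. Qed.

Lemma lin_ext_flatten F (ss : seq (seq (R * T))) :
  lin_ext F (flatten ss) = \sum_(s <- ss) lin_ext F s.
Proof. by rewrite /lin_ext big_flatten. Qed.

Lemma lin_ext_comp (g : T -> U) (F : U -> R) s :
  lin_ext (F \o g) s =
  \sum_(u <- undup [seq g t.2 | t <- s]) F u * lin_ext (fun x => (g x == u)%:R) s.
Proof.
under [RHS]eq_bigr do rewrite /lin_ext big_distrr /=.
rewrite exchange_big /=; apply: eq_big_seq => t ts.
rewrite (bigD1_seq (g t.2)) ?undup_uniq ?mem_undup ?(map_f (fun t => g t.2)) //=.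
rewrite eqxx mulr1 mulrC big1 ?addr0 // => u /negbTE nu.
by rewrite eq_sym nu !mulr0.
Qed.

Lemma lin_ext_comp_eq0 (g : T -> U) (F : U -> R) s :
  (forall u, lin_ext (fun x => (g x == u)%:R) s = 0) -> lin_ext (F \o g) s = 0.
Proof. by move=> g0; rewrite lin_ext_comp big1 // => u _; rewrite g0 mulr0. Qed.

Lemma lin_ext_delta_neq0 (g : T -> U) s u :
  lin_ext (fun x => (g x == u)%:R) s != 0 -> exists2 t, t \in s & g t.2 = u.
Proof.
move=> nz; case: (@hasP _ (fun t : R * T => g t.2 == u) s) => [[t ts /eqP] | no_t].
  by exists t.
case/eqP: nz; rewrite /lin_ext big_seq big1 // => t ts.
by case: eqP => [gt | _]; [case: no_t; exists t; rewrite ?gt | rewrite mulr0].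
Qed.

Definition comb_bind (s : seq (R * T)) (f : T -> seq (R * U)) : seq (R * U) :=
  flatten [seq [seq (t.1 * u.1, u.2) | u <- f t.2] | t <- s].

Lemma lin_ext_bind (F : U -> R) s (f : T -> seq (R * U)) :
  lin_ext F (comb_bind s f) = lin_ext (fun x => lin_ext F (f x)) s.
Proof.
rewrite /comb_bind /lin_ext big_flatten big_map; apply: eq_bigr => t _.
by rewrite big_map big_distrr; apply: eq_bigr => u _; rewrite /= mulrA.
Qed.

Lemma mem_comb_bind (P : U -> Prop) s (f : T -> seq (R * U)) :
  (forall t u, t \in s -> u \in f t.2 -> P u.2) ->
  forall u, u \in comb_bind s f -> P u.2.
Proof.
by move=> Pf u /flattenP [_ /mapP [t ts ->] /mapP [v vf ->]]; apply: Pf vf.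
Qed.

End FormalCombinations.

Section Vectors.
Variables (H : posetHopfData) (k : fieldType).
Local Notation car := (Defs.car H).
Local Notation cop := (@Defs.cop H).
Local Notation vect := (vect H k).

Definition comb_of (v : vect) : seq (k * car) := [seq (v x, x) | x <- finsupp v].

Definition vect_of (T : choiceType) (g : T -> car) (s : seq (k * T)) : vect :=
  [fsfun x in [fset g t.2 | t in s] => lin_ext (fun y => (g y == x)%:R) s].

Definition cop_coef S T (s : seq (k * car)) (yz : car * car) : k :=
  lin_ext (fun x => (cop S T x == yz)%:R) s.

Lemma vect_ofE (T : choiceType) (g : T -> car) s x :
  vect_of g s x = lin_ext (fun y => (g y == x)%:R) s.
Proof.
rewrite /vect_of fsfunE; case: ifP => // gx; apply/esym/eqP.
by apply: contraFT gx => /lin_ext_delta_neq0 [t ts <-]; apply/imfsetP; exists t.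
Qed.

Lemma finsupp_vect_of (T : choiceType) (g : T -> car) s x :
  x \in finsupp (vect_of g s) -> exists2 t, t \in s & g t.2 = x.
Proof. by rewrite mem_finsupp vect_ofE => /lin_ext_delta_neq0. Qed.

Lemma lin_ext_comb_delta v x : lin_ext (fun y => (y == x)%:R) (comb_of v) = v x.
Proof.
rewrite /lin_ext big_map; have [xv | xv] := boolP (x \in finsupp v).
  rewrite (bigD1_seq x) ?fset_uniq //= eqxx mulr1 big1 ?addr0 // => y /negbTE->.
  by rewrite mulr0.
rewrite fsfun_dflt // big_seq big1 // => y yv.
by case: eqP => [yx | _]; [rewrite -yx yv in xv | rewrite mulr0].
Qed.

Lemma lin_ext_comb_vect_of (F : car -> k) s :
  lin_ext F (comb_of (vect_of id s)) = lin_ext F s.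
Proof.
rewrite /lin_ext big_map (@big_fset_incl _ _ _ _ _ [fset t.2 | t in s]); last first.
- by move=> x _ /fsfun_dflt ->; rewrite mul0r.
- by apply/fsubsetP => x /finsupp_vect_of [t ts <-]; apply/imfsetP; exists t.
under eq_bigr do rewrite vect_ofE big_distrl /=.
rewrite exchange_big /=; apply: eq_big_seq => t ts.
rewrite (bigD1_seq t.2) ?fset_uniq //=; last by apply/imfsetP; exists t.
by rewrite eqxx mulr1 big1 ?addr0 // => x /negbTE nx; rewrite eq_sym nx mulr0 mul0r.
Qed.

Lemma copL_comb S T v yz : copL S T v yz = cop_coef S T (comb_of v) yz.
Proof.
rewrite /copL /cop_coef /lin_ext big_map big_mkcond; apply: eq_bigr => x _ /=.
by case: eqP; rewrite ?mulr1 ?mulr0.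
Qed.

End Vectors.

Section PrimitiveProjection.
Variables (H : posetHopfData) (k : fieldType) (i0 : nat).
Local Notation car := (Defs.car H).
Local Notation lab := (@Defs.lab H).
Local Notation one := (Defs.one H).
Local Notation mul := (@Defs.mul H).
Local Notation cop := (@Defs.cop H).
Local Notation cop_coef := (@cop_coef H k).
Implicit Types (A B S J : {fset nat}) (w : car).

Hypothesis HH : poset_hopf_monoid H.

Definition rooted_psubsets (J : {fset nat}) : seq {fset nat} :=
  [seq X : {fset nat} <- enum_fset (fpowerset J) | (i0 \in X) && (X != J)].

Lemma mem_rooted_psubsets S J :
  (S \in rooted_psubsets J) = [&& S `<=` J, i0 \in S & S != J].
Proof. by rewrite mem_filter fpowersetE andbC. Qed.

Lemma rooted_psubsets_card S J : S \in rooted_psubsets J -> (#|` S| < #|` J|)%N.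
Proof.
rewrite mem_rooted_psubsets => /and3P [sSJ _ nSJ].
by rewrite fproper_ltn_card ?fproperEneq ?nSJ.
Qed.

Lemma rooted_psubsets0 : rooted_psubsets fset0 = [::].
Proof.
case E: rooted_psubsets => [|S s] //; have := mem_head S s.
by rewrite -E mem_rooted_psubsets fsubset0 => /and3P [/eqP -> ]; rewrite inE.
Qed.

Definition restr S w := (cop S (lab w `\` S) w).1.
Definition contr S w := (cop S (lab w `\` S) w).2.

Lemma lab_restr S w : S `<=` lab w -> lab (restr S w) = S.
Proof. by move=> sS; have [] := lab_cop HH (fdisjointDr S (lab w)) (esym (fsetUDK sS)). Qed.

Lemma lab_contr S w : S `<=` lab w -> lab (contr S w) = lab w `\` S.
Proof. by move=> sS; have [] := lab_cop HH (fdisjointDr S (lab w)) (esym (fsetUDK sS)). Qed.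

(* [n] is fuel for the recursion on [#|` lab w|], irrelevant once [#|` lab w| <= n]. *)
Fixpoint primn n w : seq (k * car) :=
  if n is n'.+1 then
    (1, w) :: flatten [seq [seq (- t.1, mul t.2 (contr U w)) | t <- primn n' (restr U w)]
                      | U <- rooted_psubsets (lab w)]
  else [:: (1, w)].

Lemma primnS n w : primn n.+1 w =
  (1, w) :: flatten [seq [seq (- t.1, mul t.2 (contr U w)) | t <- primn n (restr U w)]
                    | U <- rooted_psubsets (lab w)].
Proof. by []. Qed.

Lemma lin_ext_primnS (F : car -> k) n w :
  lin_ext F (primn n.+1 w) = F w -
  \sum_(S <- rooted_psubsets (lab w))
     lin_ext (fun y => F (mul y (contr S w))) (primn n (restr S w)).
Proof.
rewrite primnS lin_ext_cons mul1r lin_ext_flatten big_map -sumrN; congr (_ + _).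
apply: eq_bigr => U _; rewrite /lin_ext big_map -sumrN.
by apply: eq_bigr => t _; rewrite mulNr.
Qed.

Lemma lab_primn n w t : t \in primn n w -> lab t.2 = lab w.
Proof.
elim: n w t => [|n IH] w t; first by rewrite inE => /eqP ->.
rewrite primnS inE => /predU1P [-> // | /flattenP [s /mapP [S]]].
rewrite mem_rooted_psubsets => /and3P [sS _ _] -> /mapP [[a y] /IH /= ly ->] /=.
by rewrite (lab_mul HH) ly (lab_restr sS) ?lab_contr ?fsetUDK ?fdisjointDr.
Qed.

Lemma primnS_stable n w : (#|` lab w| <= n)%N -> primn n.+1 w = primn n w.
Proof.
elim: n w => [|n IH] w lw_n.
  by move: lw_n; rewrite leqn0 cardfs_eq0 primnS => /eqP ->; rewrite rooted_psubsets0.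
rewrite primnS [RHS]primnS; congr (_ :: flatten _); apply/eq_in_map => S Sw.
rewrite IH // lab_restr; last by move: Sw; rewrite mem_rooted_psubsets => /andP [].
by rewrite -ltnS (leq_trans (rooted_psubsets_card Sw)).
Qed.

Definition prim_part w := primn (#|` lab w|).+1 w.

Definition dec_part w : seq (k * (car * car)) :=
  flatten [seq [seq (t.1, (t.2, contr U w)) | t <- primn #|` lab w| (restr U w)]
          | U <- rooted_psubsets (lab w)].

Lemma lin_ext_prim (F : car -> k) w :
  lin_ext F (prim_part w) + lin_ext (fun yz => F (mul yz.1 yz.2)) (dec_part w) = F w.
Proof.
have -> : lin_ext (fun yz => F (mul yz.1 yz.2)) (dec_part w) =
    \sum_(U <- rooted_psubsets (lab w))
       lin_ext (fun y => F (mul y (contr U w))) (primn #|` lab w| (restr U w)).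
  rewrite lin_ext_flatten big_map; apply: eq_bigr => U _.
  exact: (lin_ext_map (fun y => (y, contr U w))).
by rewrite lin_ext_primnS subrK.
Qed.

Lemma dec_part_nontriv w t :
  t \in dec_part w -> nontriv_decomp (lab w) (lab t.2.1) (lab t.2.2).
Proof.
move=> /flattenP [s /mapP [S]]; rewrite mem_rooted_psubsets => /and3P [sS iS nS].
move=> -> /mapP [[a y] /lab_primn /= ly ->] /=.
rewrite ly (lab_restr sS) (lab_contr sS); split.
- exact: fdisjointDr.
- exact: fsetUDK.
- exact: fset_neq0 iS.
- by rewrite fsetD_eq0; apply: contra nS => wS; rewrite eqEfsubset sS.
Qed.

Hypothesis cop_comm : forall S T x, [disjoint S & T] -> lab x = S `|` T ->
  cop T S x = ((cop S T x).2, (cop S T x).1).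

Lemma cop_coefC A B s y z : [disjoint A & B] ->
  {in s, forall t : k * car, lab t.2 = A `|` B} ->
  cop_coef A B s (y, z) = cop_coef B A s (z, y).
Proof.
move=> dAB ls; apply: eq_in_lin_ext => t /ls lt; rewrite (cop_comm dAB lt).
by case: (cop A B t.2) => a b; rewrite /= !xpair_eqE andbC.
Qed.

Lemma coassoc_restr S A B w : S `<=` A -> [disjoint A & B] -> lab w = A `|` B ->
  restr S (cop A B w).1 = restr S w /\
  cop (A `\` S) B (contr S w) = (contr S (cop A B w).1, (cop A B w).2).
Proof.
move=> sSA dAB lw; have [lA _] := lab_cop HH dAB lw.
have dSB : [disjoint S & B] := fdisjointWl sSA dAB.
have dASB : [disjoint A `\` S & B] := fdisjointWl (fsubsetDl A S) dAB.
have lw3 : lab w = S `|` (A `\` S) `|` B by rewrite fsetUDK.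
have [h1 h2] := cop_coassoc HH (fdisjointDr S A) dSB dASB lw3.
rewrite fsetUDK // -fsetDUl_disjoint 1?fdisjoint_sym // -lw in h1 h2.
rewrite /restr /contr lA h1 h2; split=> //.
by case: (cop (A `\` S) B _).
Qed.

Lemma cop_mul_contr S A B w y : S `<=` A -> [disjoint A & B] -> lab w = A `|` B ->
  lab y = S ->
  cop A B (mul y (contr S w)) = (mul y (contr S (cop A B w).1), (cop A B w).2).
Proof.
move=> sSA dAB lw ly.
have sSw : S `<=` lab w by rewrite lw (fsubset_trans sSA) ?fsubsetUl.
rewrite (cop_mul HH (fdisjointDr S (lab w)) dAB) ?fsetUDK ?lab_contr //.
have -> : S `&` A = S by apply/fsetIidPl.
have -> : S `&` B = fset0 by apply: disjoint_fsetI0; apply: fdisjointWl dAB.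
have -> : (lab w `\` S) `&` A = A `\` S.
  by rewrite lw fsetIDAC (fsetIidPr (fsubsetUl _ _)).
have -> : (lab w `\` S) `&` B = B.
  rewrite lw fsetIDAC (fsetIidPr (fsubsetUr _ _)); apply/fsetDidPl.
  by rewrite fdisjoint_sym; apply: fdisjointWl dAB.
have [_ ->] := coassoc_restr sSA dAB lw.
by rewrite -ly (cop_lab0 HH) /= (mul1m HH).
Qed.

Lemma cop_coef_mulr_eq0 A B S s z yz :
  [disjoint A & B] -> [disjoint S & lab z] -> S `|` lab z = A `|` B ->
  {in s, forall t : k * car, lab t.2 = S} ->
  (forall uv, cop_coef (S `&` A) (S `&` B) s uv = 0) ->
  lin_ext (fun y => (cop A B (mul y z) == yz)%:R) s = 0.
Proof.
move=> dAB dSz SzAB ls s_prim.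
pose c := cop (lab z `&` A) (lab z `&` B) z.
pose Fc (uv : car * car) : k := ((mul uv.1 c.1, mul uv.2 c.2) == yz)%:R.
rewrite (eq_in_lin_ext (G := Fc \o cop (S `&` A) (S `&` B))).
  exact: lin_ext_comp_eq0.
by move=> t /ls lt; rewrite /= (cop_mul HH dSz dAB SzAB lt).
Qed.

Lemma perm_rooted_psubsets_sub A J : i0 \in A -> A `<=` J -> A != J ->
  perm_eq [seq X <- rooted_psubsets J | X `<=` A] (A :: rooted_psubsets A).
Proof.
move=> iA sAJ nAJ; apply: uniq_perm.
- by rewrite !filter_uniq ?fset_uniq.
- by rewrite /= mem_rooted_psubsets eqxx !andbF filter_uniq ?fset_uniq.
move=> S; rewrite mem_filter inE !mem_rooted_psubsets.
have [-> | nSA] /= := eqVneq S A; first by rewrite fsubset_refl sAJ iA nAJ.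
have [sSA | //] := boolP (S `<=` A); rewrite (fsubset_trans sSA sAJ) /= andbT.
by case: (i0 \in S) => //=; apply: contraNneq nAJ => SJ; rewrite eqEfsubset sAJ -SJ.
Qed.

Lemma sum_rooted_psubsets_sub n w A B yz :
  (#|` lab w| <= n.+1)%N -> i0 \in A -> nontriv_decomp (lab w) A B ->
  \sum_(S <- rooted_psubsets (lab w) | S `<=` A)
     lin_ext (fun y => (cop A B (mul y (contr S w)) == yz)%:R) (primn n (restr S w)) =
  (cop A B w == yz)%:R.
Proof.
move=> lw_n iA [dAB ABw _ nB].
have lw : lab w = A `|` B by rewrite ABw.
have sAw : A `<=` lab w by rewrite lw fsubsetUl.
have nAw : A != lab w.
  apply: contraNneq nB => Aw; have sBA : B `<=` A by rewrite Aw lw fsubsetUr.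
  by rewrite -(fsetIidPl sBA) fsetIC (disjoint_fsetI0 dAB).
have [lA _] := lab_cop HH dAB lw.
set wA := (cop A B w).1; set wB := (cop A B w).2.
pose G y : k := ((y, wB) == yz)%:R.
pose f S := lin_ext (fun y => G (mul y (contr S wA))) (primn n (restr S wA)).
have in_A S : S `<=` A ->
    lin_ext (fun y => (cop A B (mul y (contr S w)) == yz)%:R) (primn n (restr S w)) = f S.
  move=> sSA; have [<- _] := coassoc_restr sSA dAB lw.
  apply: eq_in_lin_ext => -[a y] /lab_primn /= ly.
  by rewrite cop_mul_contr // ly lab_restr ?lA.
have fA : f A = lin_ext G (primn n.+1 wA).
  have cA : cop A fset0 wA = (wA, one) by rewrite -lA (cop_lab0 HH).
  rewrite primnS_stable; last first.
    by rewrite lA -ltnS (leq_trans _ lw_n) // fproper_ltn_card // fproperEneq nAw.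
  rewrite /f /restr /contr lA fsetDv cA /=.
  by apply: eq_in_lin_ext => t _; rewrite /= (mulm1 HH).
rewrite -big_filter (eq_big_seq f); last first.
  by move=> S; rewrite mem_filter => /andP [sSA _]; apply: in_A.
rewrite (perm_big _ (perm_rooted_psubsets_sub iA sAw nAw)) big_cons fA lin_ext_primnS lA.
by rewrite /= subrK /G -surjective_pairing.
Qed.

Lemma primn_primitive n w A B yz : (#|` lab w| <= n)%N -> i0 \in lab w ->
  nontriv_decomp (lab w) A B -> cop_coef A B (primn n w) yz = 0.
Proof.
elim: n w A B yz => [|n IH] w A B yz lw_n iw [dAB ABw nA nB].
  by move: lw_n iw; rewrite leqn0 cardfs_eq0 => /eqP ->; rewrite inE.
wlog iA : A B yz dAB ABw nA nB / i0 \in A.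
  move=> wlog_iA; have [|iA] := boolP (i0 \in A); first exact: wlog_iA.
  case: yz => y z; rewrite cop_coefC //; last by move=> t /lab_primn ->.
  apply: wlog_iA; rewrite 1?fdisjoint_sym 1?fsetUC //.
  by move: iw; rewrite -ABw inE (negbTE iA).
rewrite /cop_coef lin_ext_primnS (bigID (fun S => S `<=` A)) /= sum_rooted_psubsets_sub //.
rewrite big_seq_cond big1 ?addr0 ?subrr // => S /andP [Sw nSA].
have := Sw; rewrite mem_rooted_psubsets => /and3P [sSw iS _].
have sSAB : S `<=` A `|` B by rewrite ABw.
apply: (@cop_coef_mulr_eq0 A B S _ (contr S w) yz dAB).
- by rewrite lab_contr // fdisjointDr.
- by rewrite lab_contr // fsetUDK.
- by move=> t /lab_primn ->; rewrite lab_restr.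
move=> uv; apply: IH; rewrite ?lab_restr //.
  by rewrite -ltnS (leq_trans (rooted_psubsets_card Sw)).
split; [exact: fdisjointI | exact: fsetIUr_sub | |].
  by apply: (@fset_neq0 _ i0); rewrite inE iS iA.
by apply: contra nSA => /eqP SB0; rewrite -(fsetIUr_sub sSAB) SB0 fsetU0 fsubsetIr.
Qed.

Lemma exists_primitive_decomposition (I : {fset nat}) (v : vect H k) :
  (I != fset0 -> i0 \in I) -> in_kH I v ->
  exists p d, [/\ primitive I p, in_decomposables I d & forall x, v x = p x + d x].
Proof.
move=> i0I vI; have lab_comb t : t \in comb_of v -> lab t.2 = I.
  by case/mapP=> x /vI lx ->.
pose ps := comb_bind (comb_of v) prim_part; pose ds := comb_bind (comb_of v) dec_part.
have ds_nontriv t : t \in ds -> nontriv_decomp I (lab t.2.1) (lab t.2.2).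
  apply: (mem_comb_bind (P := fun yz => nontriv_decomp I (lab yz.1) (lab yz.2))).
  by move=> u t' /lab_comb <-; apply: dec_part_nontriv.
exists (vect_of id ps), (vect_of (fun yz => mul yz.1 yz.2) ds); split.
- split=> [x /finsupp_vect_of [t tps <-] | A B ABI yz].
    apply: (mem_comb_bind (P := fun x => lab x = I)) tps => u t' /lab_comb <-.
    exact: lab_primn.
  rewrite copL_comb /cop_coef lin_ext_comb_vect_of lin_ext_bind.
  apply: lin_ext_eq0 => t /lab_comb lt; apply: primn_primitive; rewrite ?lt //.
  apply: i0I; case: ABI => _ <- nA _; apply: contraNneq nA.
  by move/eqP; rewrite fsetU_eq0 => /andP [].
- split=> [x /finsupp_vect_of [t tds <-] | ].
    by have [dyz <- _ _] := ds_nontriv t tds; rewrite (lab_mul HH).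
  by exists ds; split=> // x; rewrite vect_ofE.
move=> x; rewrite !vect_ofE !lin_ext_bind -lin_extD -[LHS]lin_ext_comb_delta.
by apply: eq_in_lin_ext => t _; rewrite lin_ext_prim.
Qed.

End PrimitiveProjection.

Lemma exists_maximal (T : eqType) (R : T -> T -> Prop) (s : seq T) x :
  (forall x y z, R x y -> R y z -> R x z) -> (forall x y, R x y -> R y x -> x = y) ->
  x \in s -> exists2 m, m \in s & forall y, y \in s -> R m y -> y = m.
Proof.
move=> R_trans R_anti; elim: s x => // a s IH x _.
case: s IH => [_ | b s IH]; first by exists a => [|y /[1!inE] /eqP ->]; rewrite ?inE.
have [m ms m_max] := IH b (mem_head _ _).
have [Rma | nRma] := pselect (R m a).
  exists a => [|y /[1!inE] /predU1P [-> // | ys] Ray]; first exact: mem_head.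
  have ym := m_max y ys (R_trans _ _ _ Rma Ray); rewrite ym in Ray *.
  exact: R_anti.
exists m => [|y /[1!inE] /predU1P [-> // | ]]; first by rewrite inE ms orbT.
exact: m_max.
Qed.

Section Uniqueness.
Variables (H : posetHopfData) (k : fieldType) (R : car H -> car H -> Prop).
Local Notation car := (Defs.car H).
Local Notation lab := (@Defs.lab H).
Local Notation mul := (@Defs.mul H).
Local Notation cop := (@Defs.cop H).

Hypotheses (R_refl : forall x, R x x) (R_anti : forall x y, R x y -> R y x -> x = y).
Hypotheses (R_trans : forall x y z, R x y -> R y z -> R x z).
Hypothesis R_adj : mul_cop_adjunction R.

Lemma lin_ext_upset_maximal (v : vect H k) m : m \in finsupp v ->
  (forall y, y \in finsupp v -> R m y -> y = m) ->
  lin_ext (fun y => `[< R m y >]%:R) (comb_of v) = v m.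
Proof.
move=> mv m_max; rewrite -lin_ext_comb_delta; apply: eq_in_lin_ext => _ /mapP [y yv ->] /=.
case: eqP => [-> | nym]; first by rewrite asboolT.
by rewrite asboolF // => /(m_max y yv).
Qed.

Lemma primitive_upset_eq0 I (v : vect H k) a b :
  primitive I v -> nontriv_decomp I (lab a) (lab b) ->
  lin_ext (fun y => `[< R (mul a b) y >]%:R) (comb_of v) = 0.
Proof.
move=> [vI v_prim] ab_nt; have [dab abI _ _] := ab_nt.
pose G (uv : car * car) : k := `[< R a uv.1 /\ R b uv.2 >]%:R.
rewrite (eq_in_lin_ext (G := G \o cop (lab a) (lab b))).
  by apply: lin_ext_comp_eq0 => uv; move: (v_prim _ _ ab_nt uv); rewrite copL_comb.
move=> _ /mapP [y /vI ly ->] /=; rewrite -abI in ly.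
by rewrite (asbool_equiv_eq (R_adj dab ly erefl erefl)).
Qed.

Lemma primitive_decomposable_eq0 I (v : vect H k) :
  primitive I v -> in_decomposables I v -> forall x, v x = 0.
Proof.
move=> v_prim [_ [s [s_nt v_s]]] x.
have [xv | /fsfun_dflt //] := boolP (x \in finsupp v).
have [m mv m_max] := exists_maximal R_trans R_anti xv.
have [t ts tm] : exists2 t, t \in s & mul t.2.1 t.2.2 = m.
  apply: (lin_ext_delta_neq0 (g := fun yz => mul yz.1 yz.2)).
  by move: mv; rewrite mem_finsupp v_s.
have := primitive_upset_eq0 v_prim (s_nt t ts).
by rewrite tm lin_ext_upset_maximal // => vm0; move: mv; rewrite mem_finsupp vm0 eqxx.
Qed.

End Uniqueness.

Theorem mainTheorem9 (k : fieldType) (char0 : [pchar k]%R =i pred0)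
  (H : posetHopfData) (HH : poset_hopf_monoid H) (Hsa : self_adjoint H)
  (I : {fset nat}) :
  direct_sum_p_d H k I.
Proof.
have [R [R_refl R_anti R_trans R_adj]] := self_adjoint_adjunction HH Hsa.
have cocomm := copC HH R_anti R_refl R_adj.
have [i0 i0I] : exists i0, I != fset0 -> i0 \in I.
  by have [-> | [i iI]] := fset_0Vmem I; [exists 0%N; rewrite eqxx | exists i].
split=> v; first exact: (exists_primitive_decomposition (v := v) HH cocomm i0I).
exact: (primitive_decomposable_eq0 (v := v) R_refl R_anti R_trans R_adj).
Qed.
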